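(* Let $K$ be a finite simplicial complex, $N\subseteq K$ a closed set, and for $i=1,\dots,n$ let $\mathcal{V}_i$ be a multivector field on $K$, $\mathcal{M}_i$ a Morse decomposition (under $\mathcal{V}_i$) of an isolated invariant set $S_i$ isolated by $N$, and $G_i$ the corresponding Conley-Morse graph. Suppose each Morse set $M\in\mathcal{M}_i$ is associated with a unique index pair $(P_M,E_M)$ in $N$ for $M$. Then the algorithm described below (Algorithm FindConleyMorseFiltrations) outputs exactly the set of all Conley-Morse filtrations for $G_1,\dots,G_n$.
   Context: Notation: $\sigma\le\tau$ means $\sigma$ is a face of $\tau$; $\mathrm{cl}(A)=\{\tau:\tau\le\sigma \text{ for some }\sigma\in A\}$; $A$ is closed if $A=\mathrm{cl}(A)$; $\mathrm{mo}(A)=\mathrm{cl}(A)\setminus A$. A multivector is a convex set $A\subseteq K$ (no $\sigma\in K\setminus A$ with $\sigma_1\le\sigma\le\sigma_2$ for $\sigma_1,\sigma_2\in A$); a multivector field $\mathcal{V}$ is a partition of $K$ into multivectors, $[\sigma]_{\mathcal V}$ the multivector containing $\sigma$, and $F_{\mathcal V}(\sigma)=[\sigma]_{\mathcal V}\cup\mathrm{cl}(\sigma)$, $F_{\mathcal V}(A)=\bigcup_{\sigma\in A}F_{\mathcal V}(\sigma)$. A path is a finite sequence $\sigma_1,\dots,\sigma_m$ with $\sigma_{j}\in F_{\mathcal V}(\sigma_{j-1})$; a solution is a bi-infinite such sequence. A multivector $V$ is critical if $H_k(\mathrm{cl}(V),\mathrm{mo}(V))\ne 0$ for some $k$ (homology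 over a finite field), regular otherwise. A solution $\rho:\mathbb Z\to K$ is essential if for each $i$ with $[\rho(i)]_{\mathcal V}$ regular there are $i^-<i<i^+$ with $[\rho(i^\pm)]_{\mathcal V}\ne[\rho(i)]_{\mathcal V}$. $\mathrm{inv}_{\mathcal V}(A)$ is the set of $\sigma\in A$ lying on an essential solution with image in $A$. $S$ is invariant if $\mathrm{inv}(S)=S$. An invariant set $S$ is isolated by a closed set $N$ if $S$ is a union of multivectors of $\mathcal V$ and every path in $N$ with both endpoints in $S$ lies in $S$. A Morse decomposition of $S$ (indexed by a finite poset $\mathbb P$) is a family $\{M_p\}_{p\in\mathbb P}$ of mutually disjoint isolated invariant subsets of $S$ such that every essential solution $\rho$ in $S$ either has image in some $M_r$ or has $\alpha(\rho)\subseteq M_q$, $\omega(\rho)\subseteq M_p$ with $q>p$, where $\alpha(\rho)=\bigcap_{i\ge1}\rho((-\infty,-i])$, $\omega(\rho)=\bigcap_{i\ge1}\rho([i,\infty))$. The Conley-Morse graph has one vertex per Morse set, a directed edge $M\to M'$ iff there is a connection (a path in $N$ starting in $M$ and ending in $M'$), and vertices annotated by Poincaré polynomials of the Conley indices. An index pair in $N$ for $S$ (isolated by $N$) is a pair of closed sets $E\subseteq P\subseteq N$ with: $F_{\mathcal V}(E)\cap N\subseteq E$; $F_{\mathcal V}(P)\cap N\subseteq P$; $F_{\mathcal V}(P\setminus E)\subseteq N$; $S=\mathrm{inv}(P\setminus E)$. A sequence $\{(P_i,E_i)\}_{i=a}^b$, where $(P_i,E_i)$ is the index pair of some Morse set in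 $\mathcal M_i$, is feasible if $(P_i\setminus E_i)\cap(P_{i+1}\setminus E_{i+1})\ne\emptyset$ for $a\le i<b$; it is maximal if moreover there is no index pair $(P_{a-1},E_{a-1})$ of a Morse set in $\mathcal M_{a-1}$ with $(P_{a-1}\setminus E_{a-1})\cap(P_a\setminus E_a)\neq\emptyset$ and no index pair $(P_{b+1},E_{b+1})$ of a Morse set in $\mathcal M_{b+1}$ with $(P_b\setminus E_b)\cap(P_{b+1}\setminus E_{b+1})\ne\emptyset$. The Conley-Morse filtration of a maximal sequence is the relative zigzag filtration $(P_a,E_a)\supseteq(P_a\cap P_{a+1},E_a\cap E_{a+1})\subseteq(P_{a+1},E_{a+1})\supseteq\cdots\subseteq(P_b,E_b)$. Algorithm FindConleyMorseFiltrations: initialize sets $alive=\emptyset$, $all=\emptyset$. For $i=1,\dots,n$: set $to\_remove=\emptyset$, $still\_alive=\emptyset$; for each sequence $s\in alive$ with last term $(P',E')$ and each $M\in\mathcal M_i$ with $(P,E)=(P_M,E_M)$ satisfying $(P\setminus E)\cap(P'\setminus E')\ne\emptyset$: add to $still\_alive$ a copy of $s$ with $(P,E)$ appended, mark $M$ as ''in a sequence'', and add $s$ to $to\_remove$. Then let $dead=alive\setminus to\_remove$, set $alive=still\_alive$, $all=all\cup dead$, and for each $M\in\mathcal M_i$ not marked ''in a sequence'' add the one-term sequence $((P_M,E_M))$ to $alive$. After the loop set $all=all\cup alive$ and output the relative zigzag filtrations of the sequences in $all$. *)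

From HB Require Import structures.
From mathcomp Require Import all_boot all_order all_algebra.
Set Implicit Arguments. Unset Strict Implicit. Unset Printing Implicit Defensive.
Import Order.TTheory GRing.Theory Num.Theory.

(* Simplices of a finite simplicial complex on the vertex set 'I_d are
   nonempty sets of vertices; the face relation is set inclusion. *)
Section Complex.
Variable d : nat.
Local Notation simplex := {set 'I_d}.
Local Notation cset := {set simplex}.

Definition is_complex (K : cset) : Prop :=
  set0 \notin K /\
  forall s t : simplex, s \in K -> t \subset s -> t != set0 -> t \in K.

Definition cl (K A : cset) : cset := [set t in K | [exists s in A, t \subset s]].
Definition mo (K A : cset) : cset := cl K A :\: A.
Definition closed_in (K A : cset) : Prop := A \subset K /\ cl K A = A.

Definition convex (K A : cset) : Prop :=
  A \subset K /\
  forall s1 s s2 : simplex, s1 \in A -> s2 \in A -> s \in K ->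
    s1 \subset s -> s \subset s2 -> s \in A.

Definition mvf (K : cset) (V : {set cset}) : Prop :=
  partition V K /\ forall A, A \in V -> convex K A.

Definition Fv (K : cset) (V : {set cset}) (s : simplex) : cset :=
  pblock V s :|: cl K [set s].
Definition FvS (K : cset) (V : {set cset}) (A : cset) : cset :=
  \bigcup_(s in A) Fv K V s.

(* Relative simplicial homology H_k(cl A, mo A) over a field F.  The relative
   chain group C(cl A)/C(mo A) has basis cl A \ mo A = A; oriented simplices
   use the order of the vertices 'I_d. *)
Section Homology.
Variable F : finFieldType.
Definition chain := {ffun simplex -> F}.

Definition inc (s t : simplex) : F :=
  if (t \subset s) && (#|s :\: t| == 1)%N
  then ((-1) ^+ #|[set u in s | [exists w in s :\: t, (u < w)%N]]|)%R
  else 0%R.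

Definition rbd (A : cset) (c : chain) : chain :=
  [ffun t => if t \in A then (\sum_(s in A) c s * inc s t)%R else 0%R].

Definition kchain (A : cset) (k : nat) (c : chain) : Prop :=
  forall s, c s != 0%R -> s \in A /\ #|s| = k.+1.

Definition rel_homology_nonzero (A : cset) (k : nat) : Prop :=
  exists c, kchain A k c /\ rbd A c = 0%R /\
    ~ (exists e, kchain A k.+1 e /\ rbd A e = c).

Definition critical (A : cset) : Prop := exists k, rel_homology_nonzero A k.
End Homology.

Section Dynamics.
Variable F : finFieldType.
Variables (K : cset) (V : {set cset}).

Definition solution (rho : int -> simplex) : Prop :=
  forall z : int, rho (z + 1)%R \in Fv K V (rho z).

Definition essential (rho : int -> simplex) : Prop :=
  solution rho /\
  forall i : int, ~ critical F (pblock V (rho i)) ->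
    (exists im : int, (im < i)%R /\ pblock V (rho im) != pblock V (rho i)) /\
    (exists ip : int, (i < ip)%R /\ pblock V (rho ip) != pblock V (rho i)).

Definition in_inv (A : cset) (s : simplex) : Prop :=
  s \in A /\ exists rho, essential rho /\ (forall z, rho z \in A) /\
                         exists z, rho z = s.

Definition invariant (S : cset) : Prop := forall s, s \in S <-> in_inv S s.

Definition Frel : rel simplex := fun a b => b \in Fv K V a.

Definition isolated_by (N S : cset) : Prop :=
  invariant S /\
  (forall s, s \in S -> pblock V s \subset S) /\
  forall (x : simplex) (p : seq simplex), path Frel x p ->
    all (fun y => y \in N) (x :: p) -> x \in S -> last x p \in S ->
    all (fun y => y \in S) (x :: p).

Definition index_pair (N S P E : cset) : Prop :=
  isolated_by N S /\
  closed_in K P /\ closed_in K E /\ E \subset P /\ P \subset N /\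
  FvS K V E :&: N \subset E /\
  FvS K V P :&: N \subset P /\
  FvS K V (P :\: E) \subset N /\
  (forall s, s \in S <-> in_inv (P :\: E) s).

Definition alpha_lim (rho : int -> simplex) (s : simplex) : Prop :=
  forall i : nat, exists z : int, (z <= - (i.+1)%:Z)%R /\ rho z = s.
Definition omega_lim (rho : int -> simplex) (s : simplex) : Prop :=
  forall i : nat, exists z : int, ((i.+1)%:Z <= z)%R /\ rho z = s.

Definition morse_dec (N S : cset) (k : nat) (M : 'I_k -> cset)
    (lt : rel 'I_k) : Prop :=
  irreflexive lt /\ transitive lt /\
  (forall p q, p != q -> [disjoint M p & M q]) /\
  (forall p, M p \subset S /\ isolated_by N (M p)) /\
  forall rho, essential rho -> (forall z, rho z \in S) ->
    (exists r, forall z, rho z \in M r) \/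
    (exists q p, lt p q /\ (forall s, alpha_lim rho s -> s \in M q) /\
                          (forall s, omega_lim rho s -> s \in M p)).
End Dynamics.
End Complex.

Section Algo.
Variable T : finType.
Definition ipair := ({set T} * {set T})%type.
Definition meetp (p q : ipair) : bool :=
  (p.1 :\: p.2) :&: (q.1 :\: q.2) != set0.

(* a sequence: (starting index a, list of terms (P_a,E_a),...,(P_b,E_b)) *)
Definition sq := (nat * seq ipair)%type.
Definition lastp (s : sq) : ipair := last (set0, set0) s.2.

Fixpoint zigzag (p : ipair) (L : seq ipair) : seq ipair :=
  match L with
  | [::] => [:: p]
  | q :: L' => p :: (p.1 :&: q.1, p.2 :&: q.2) :: zigzag q L'
  end.

Definition filtration (s : sq) : sq :=
  (s.1, match s.2 with [::] => [::] | p :: L => zigzag p L end).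

(* one iteration (index i) of FindConleyMorseFiltrations;
   state = (alive, all); pairs i = index pairs of the Morse sets of M_i *)
Definition alg_step (pairs : nat -> seq ipair) (st : seq sq * seq sq) (i : nat)
  : seq sq * seq sq :=
  let alive := st.1 in let all_ := st.2 in
  let still := flatten [seq [seq (s.1, rcons s.2 q) | q <- pairs i & meetp (lastp s) q]
                       | s <- alive] in
  let dead := [seq s <- alive | ~~ has (meetp (lastp s)) (pairs i)] in
  let fresh := [seq (i, [:: q]) | q <- pairs i
                                & ~~ has (fun s => meetp (lastp s) q) alive] in
  (still ++ fresh, all_ ++ dead).

Definition find_CM_filtrations (n : nat) (pairs : nat -> seq ipair) : seq sq :=
  let st := foldl (alg_step pairs) ([::], [::]) (iota 1 n) in
  map filtration (st.2 ++ st.1).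
End Algo.

(* f is a Conley-Morse filtration for G_1..G_n: the filtration of a maximal
   feasible sequence (P_a,E_a),...,(P_b,E_b), 1 <= a <= b <= n, where
   (P_i,E_i) = PE i j is the index pair of some Morse set j of M_i. *)
Definition is_CM_filtration (T : finType) (n : nat) (m : nat -> nat)
    (PE : forall i, 'I_(m i) -> ipair T) (f : sq T) : Prop :=
  exists (a : nat) (L : seq (ipair T)),
    f = filtration (a, L) /\ L != [::] /\ (1 <= a)%N /\ (a + size L <= n.+1)%N /\
        (forall k, (k < size L)%N ->
           exists j : 'I_(m (a + k)), nth (set0, set0) L k = PE (a + k) j) /\
        (forall k, (k.+1 < size L)%N ->
           meetp (nth (set0, set0) L k) (nth (set0, set0) L k.+1)) /\
        ((1 < a)%N -> forall j : 'I_(m a.-1), ~~ meetp (PE a.-1 j) (head (set0, set0) L)) /\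
      ((a + size L <= n)%N ->
           forall j : 'I_(m (a + size L)),
             ~~ meetp (last (set0, set0) L) (PE (a + size L) j)).

(* By induction on i,
   after processing M_i the list [alive] consists exactly of the feasible
   sequences ending at i that cannot be extended to the left, and [all] of the
   maximal feasible sequences ending before i.  Moreover every index pair of
   M_i ends some alive sequence, so an index pair of M_(i+1) meets no alive
   sequence exactly when the one-term sequence it forms is left maximal. *)
From mathcomp Require Import all_boot all_order all_algebra.
From mathcomp Require Import zify.

Section FindConleyMorseFiltrations.
Variable T : finType.
Variable P : nat -> seq (ipair T).
Local Notation x0 := ((set0, set0) : ipair T).

Definition pairs_from (a : nat) (L : seq (ipair T)) : Prop :=
  forall k, (k < size L)%N -> nth x0 L k \in P (a + k).

Definition feasible (a : nat) (L : seq (ipair T)) : Prop :=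
  [/\ L != [::], (0 < a)%N, pairs_from a L & sorted (@meetp T) L].

Definition left_maximal (a : nat) (L : seq (ipair T)) : Prop :=
  (1 < a)%N -> forall q, q \in P a.-1 -> ~~ meetp q (head x0 L).

Definition right_maximal (a : nat) (L : seq (ipair T)) : Prop :=
  forall q, q \in P (a + size L) -> ~~ meetp (last x0 L) q.

Definition maximal_seq (n a : nat) (L : seq (ipair T)) : Prop :=
  [/\ feasible a L, left_maximal a L, (a + size L <= n.+1)%N
    & (a + size L <= n)%N -> right_maximal a L].

Definition alive_seq (i a : nat) (L : seq (ipair T)) : Prop :=
  [/\ feasible a L, left_maximal a L & a + size L = i.+1].

Definition dead_seq (i a : nat) (L : seq (ipair T)) : Prop :=
  [/\ feasible a L, left_maximal a L, right_maximal a L & (a + size L <= i)%N].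

Lemma feasible_size_gt1 a L : feasible a L -> (1 < a + size L)%N.
Proof. by case=> L_nil a_gt0 _ _; case: L L_nil => //= *; lia. Qed.

Lemma pairs_from_rcons a L q :
  pairs_from a (rcons L q) <-> pairs_from a L /\ q \in P (a + size L).
Proof.
rewrite /pairs_from size_rcons; split=> [hL | [hL hq] k].
  split=> [k lt_k_L|]; last by have := hL (size L); rewrite nth_rcons ltnn eqxx; apply.
  by have := hL k; rewrite nth_rcons lt_k_L; apply; apply: ltnW.
rewrite ltnS leq_eqVlt nth_rcons => /orP[/eqP-> | lt_k_L]; last by rewrite lt_k_L; apply: hL.
by rewrite ltnn eqxx.
Qed.

Lemma feasible_rcons a L q : L != [::] ->
  feasible a (rcons L q) <-> [/\ feasible a L, q \in P (a + size L) & meetp (last x0 L) q].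
Proof.
case: L => // p L _; rewrite /feasible [sorted _ (rcons _ _)]/= rcons_path.
split=> [[_ a_gt0 /pairs_from_rcons[hL hq] /andP[pL meet_q]] // | [[_ a_gt0 hL pL] hq meet_q]].
by split=> //; [apply/pairs_from_rcons | apply/andP].
Qed.

Lemma alive_seq_rcons i a L q : L != [::] ->
  alive_seq i.+1 a (rcons L q) <->
  [/\ alive_seq i a L, q \in P i.+1 & meetp (last x0 L) q].
Proof.
move=> L_nil; rewrite /alive_seq size_rcons addnS.
have -> : left_maximal a (rcons L q) = left_maximal a L by case: L L_nil.
split=> [[/(feasible_rcons _ _ _ L_nil)[feasL hq meet_q] lmax [size_L]] |
         [[feasL lmax size_L] hq meet_q]].
  by rewrite size_L in hq.
by split=> //; [apply/(feasible_rcons _ _ _ L_nil); rewrite ?size_L | rewrite size_L].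
Qed.

Lemma alive_seq_single i a q :
  alive_seq i.+1 a [:: q] <-> [/\ a = i.+1, q \in P i.+1 & left_maximal i.+1 [:: q]].
Proof.
rewrite /alive_seq /feasible /pairs_from addn1.
split=> [[[_ _ hq _] lmax [ea]] | [ea hq lmax]]; subst a.
  by split=> //; have := hq 0; rewrite addn0; apply.
by split=> //; split=> // -[|//] _; rewrite addn0.
Qed.

Lemma alive_seq_last i a L : alive_seq i a L -> last x0 L \in P i.
Proof.
case=> [[L_nil _ hL _] _ size_L]; have L_gt0 : (0 < size L)%N by case: L L_nil {hL size_L}.
rewrite -nth_last; have -> : i = (a + (size L).-1)%N by lia.
by apply: hL; rewrite prednK.
Qed.

Definition step_invariant (i : nat) (st : seq (sq T) * seq (sq T)) : Prop :=
  [/\ forall a L, (a, L) \in st.1 <-> alive_seq i a L,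
      forall a L, (a, L) \in st.2 <-> dead_seq i a L
    & (0 < i)%N -> {subset P i <= map (@lastp T) st.1}].

Section Step.
Variables (i : nat) (alive dead : seq (sq T)).
Hypothesis inv : step_invariant i (alive, dead).

Local Notation extended :=
  (flatten [seq [seq (s.1, rcons s.2 q) | q <- P i.+1 & meetp (lastp s) q] | s <- alive]).

Local Notation fresh :=
  [seq (i.+1, [:: q]) | q <- P i.+1 & ~~ has (fun s => meetp (lastp s) q) alive].

Lemma mem_extended a L q :
  (a, rcons L q) \in extended <->
  [/\ (a, L) \in alive, q \in P i.+1 & meetp (last x0 L) q].
Proof.
split=> [/flattenP[_ /mapP[[b L'] mem_s ->]] | [mem_s hq meet_q]].
  case/mapP=> q'; rewrite mem_filter => /andP[meet_q' hq'] [-> /rcons_inj[-> ->]].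
  by split.
apply/flattenP; exists [seq (a, rcons L q') | q' <- P i.+1 & meetp (last x0 L) q'].
  exact: (map_f (fun s => [seq (s.1, rcons s.2 q') | q' <- P i.+1 & meetp (lastp s) q']) mem_s).
by apply: map_f; rewrite mem_filter meet_q hq.
Qed.

Lemma nil_notin_extended a : (a, [::]) \notin extended.
Proof. by apply/flattenP=> -[_ /mapP[s _ ->] /mapP[q _ []]]; case: s.2. Qed.

Lemma no_alive_meetE q :
  ~~ has (fun s => meetp (lastp s) q) alive <-> left_maximal i.+1 [:: q].
Proof.
have [alive_spec _ cover] := inv.
split=> [/hasPn no_meet i_gt0 q' /(cover i_gt0)/mapP[s mem_s ->] | lmax].
  exact: no_meet.
apply/hasPn=> -[a L] /alive_spec alive_L; rewrite /lastp /=.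
have i_gt0 : (1 < i.+1)%N by case: alive_L => /feasible_size_gt1 + _ size_L; rewrite size_L.
exact: lmax i_gt0 _ (alive_seq_last _ _ _ alive_L).
Qed.

Lemma mem_fresh a q : (a, [:: q]) \in fresh <-> alive_seq i.+1 a [:: q].
Proof.
rewrite alive_seq_single; split=> [/mapP[q'] | [-> hq lmax]].
  by rewrite mem_filter => /andP[/no_alive_meetE lmax hq'] [-> ->].
by apply: (map_f (fun q' => (i.+1, [:: q']))); rewrite mem_filter hq andbT; apply/no_alive_meetE.
Qed.

Lemma alive_step a L : (a, L) \in extended ++ fresh <-> alive_seq i.+1 a L.
Proof.
have [alive_spec _ _] := inv.
rewrite mem_cat; case/lastP: L => [|L q].
  by rewrite (negbTE (nil_notin_extended _)) /=; split=> [/mapP[? _ []] | [[]]].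
have [-> | L_nil] := eqVneq L [::].
  rewrite -mem_fresh; split=> [/orP[/(mem_extended _ [::])[/alive_spec[[]]] //|] // | ->].
  exact: orbT.
rewrite alive_seq_rcons //; split=> [/orP[/mem_extended[/alive_spec] //|] | [alive_L hq meet_q]].
  by case/mapP=> q' _ [_ /(congr1 size)]; rewrite size_rcons; case: L L_nil.
by apply/orP; left; apply/mem_extended; split=> //; apply/alive_spec.
Qed.

Lemma dead_step a L :
  (a, L) \in dead ++ [seq s <- alive | ~~ has (meetp (lastp s)) (P i.+1)] <->
  dead_seq i.+1 a L.
Proof.
have [alive_spec dead_spec _] := inv.
rewrite mem_cat mem_filter /dead_seq; split.
  case/orP=> [/dead_spec[feasL lmax rmax size_L] | /andP[/hasPn no_ext /alive_spec]].
    by split=> //; apply: leqW.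
  by case=> feasL lmax size_L; split=> //; [move=> q; rewrite size_L => /no_ext | rewrite size_L].
case=> feasL lmax rmax; rewrite leq_eqVlt => /orP[/eqP size_L | size_L]; last first.
  by apply/orP; left; apply/dead_spec.
apply/orP; right; apply/andP; split; last by apply/alive_spec.
by apply/hasPn=> q hq; apply: rmax; rewrite size_L.
Qed.

Lemma cover_step : {subset P i.+1 <= map (@lastp T) (extended ++ fresh)}.
Proof.
move=> q hq; rewrite map_cat mem_cat.
have [/hasP[[a L] mem_L meet_q] | no_meet] := boolP (has (fun s => meetp (lastp s) q) alive).
  apply/orP; left; apply/mapP; exists (a, rcons L q); last by rewrite /lastp last_rcons.
  exact/mem_extended.
apply/orP; right; apply/mapP; exists (i.+1, [:: q]) => //.
by apply: (map_f (fun q' => (i.+1, [:: q']))); rewrite mem_filter hq andbT.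
Qed.

Lemma step_invariantS : step_invariant i.+1 (alg_step P (alive, dead) i.+1).
Proof. by split=> [a L | a L | _]; [apply: alive_step | apply: dead_step | apply: cover_step]. Qed.
End Step.

Lemma step_invariant_foldl n :
  step_invariant n (foldl (alg_step P) ([::], [::]) (iota 1 n)).
Proof.
elim: n => [|n IHn].
  by split=> //= a L; split=> // -[/feasible_size_gt1 *]; lia.
rewrite -addn1 iotaD foldl_cat add1n addn1 /=.
by case: (foldl _ _ _) IHn => alive dead; apply: step_invariantS.
Qed.

Lemma mem_find_CM_filtrations n f :
  f \in find_CM_filtrations n P <-> exists a L, f = filtration (a, L) /\ maximal_seq n a L.
Proof.
have [alive_spec dead_spec _] := step_invariant_foldl n.
split=> [/mapP[[a L] mem_L ->] | [a [L [-> [feasL lmax size_L rmax]]]]].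
  exists a, L; split=> //; move: mem_L; rewrite mem_cat.
  case/orP=> [/dead_spec[feasL lmax rmax size_L] | /alive_spec[feasL lmax size_L]].
    by split=> //; apply: leqW.
  by split=> //; rewrite size_L // ltnn.
apply: map_f; rewrite mem_cat; move: size_L; rewrite leq_eqVlt => /orP[/eqP size_L | size_L].
  by apply/orP; right; apply/alive_spec.
by apply/orP; left; apply/dead_spec; split=> //; apply: rmax.
Qed.
End FindConleyMorseFiltrations.

Lemma is_CM_filtrationE (T : finType) n (m : nat -> nat)
    (PE : forall i, 'I_(m i) -> ipair T) f :
  is_CM_filtration n PE f <->
  exists a L, f = filtration (a, L) /\
              @maximal_seq T (fun i => [seq PE i j | j <- enum 'I_(m i)]) n a L.
Proof.
have memPE i q : q \in [seq PE i j | j <- enum 'I_(m i)] <-> exists j, q = PE i j.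
  by split=> [/mapP[j _ ->] | [j ->]]; [exists j | apply: map_f; rewrite mem_enum].
split=> [[a [L [-> [L_nil [a_gt0 [size_L [hL [meetL [lmax rmax]]]]]]]]] |
         [a [L [-> [[L_nil a_gt0 hL /(sortedP (set0, set0)) meetL] lmax size_L rmax]]]]].
  exists a, L; split=> //; split=> //.
  - split=> //; last exact/(sortedP (set0, set0)).
    by move=> k /hL[j ->]; apply/memPE; exists j.
  - by move=> a_gt1 q /memPE[j ->]; apply: lmax.
  - by move=> /rmax rmax' q /memPE[j ->]; apply: rmax'.
exists a, L; do 4 (split=> //).
split=> [k /hL/memPE // |]; split=> //.
by split=> [a_gt1 j | /rmax rmax' j]; [apply: lmax a_gt1 _ _ | apply: rmax'];
  rewrite map_f ?mem_enum.
Qed.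

Theorem proposition17 (d : nat) (F : finFieldType) (K N : {set {set 'I_d}})
  (n : nat) (V : nat -> {set {set {set 'I_d}}}) (S : nat -> {set {set 'I_d}})
  (m : nat -> nat) (M : forall i, 'I_(m i) -> {set {set 'I_d}})
  (lt : forall i, rel 'I_(m i))
  (PE : forall i, 'I_(m i) -> {set {set 'I_d}} * {set {set 'I_d}}) :
  is_complex K -> closed_in K N ->
  (forall i, (1 <= i <= n)%N ->
     [/\ mvf K (V i),
         isolated_by F K (V i) N (S i),
         morse_dec F K (V i) N (S i) (M i) (lt i)
       & forall j, index_pair F K (V i) N (M i j) (PE i j).1 (PE i j).2]) ->
  forall f, f \in find_CM_filtrations n (fun i => [seq PE i j | j <- enum 'I_(m i)])
            <-> is_CM_filtration n PE f.
Proof.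
move=> _ _ _ f.
exact: iff_trans (mem_find_CM_filtrations _ _ _ _) (iff_sym (is_CM_filtrationE _ _ _ _ _)).
Qed.
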